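(* If $Q$ is a quantity space over a field $K$, then every dimension $\mathsf{C}\in Q/{\sim}$ contains a non-zero unit quantity for $\mathsf{C}$.
   Context: A scalable monoid over a (unital, associative) ring $R$ is a monoid $X$ (identity $1_X$, product written $xy$) together with a map $R\times X\to X$, $(\alpha,x)\mapsto\alpha\cdot x$, such that $1\cdot x=x$, $\alpha\cdot(\beta\cdot x)=\alpha\beta\cdot x$ and $\alpha\cdot(xy)=(\alpha\cdot x)y=x(\alpha\cdot y)$. A quantity space over a field $K$ is a commutative scalable monoid $Q$ over $K$ for which there exists a basis, i.e. a finite set $\{e_1,\ldots,e_n\}$ of invertible elements of $Q$ such that every $x\in Q$ has a unique expansion $x=\mu\cdot\prod_{i=1}^n e_i^{k_i}$ with $\mu\in K$ and $k_i\in\mathbb{Z}$. On $Q$, $x\sim y$ iff $\alpha\cdot x=\beta\cdot y$ for some $\alpha,\beta\in K$; equivalence classes are called dimensions and $Q/{\sim}$ is the set of them. An element $x$ is non-zero if $x\neq0\cdot x$. A unit quantity (unit element) for a class $\mathsf{C}$ is some $u\in\mathsf{C}$ such that every $x\in\mathsf{C}$ equals $\lambda\cdot u$ for some $\lambda\in K$, and such that $\lambda\cdot u=\lambda'\cdot u$ implies $\lambda=\lambda'$. *)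

From mathcomp Require Import all_boot all_order all_algebra.
Set Implicit Arguments. Unset Strict Implicit. Unset Printing Implicit Defensive.
Import GRing.Theory.
Local Open Scope ring_scope.

Section QS.
Variables (K : fieldType) (X : Type)
  (mul : X -> X -> X) (one : X) (sc : K -> X -> X).

Definition scalable_monoid : Prop :=
  (forall x y z, mul x (mul y z) = mul (mul x y) z) /\
  (forall x, mul one x = x) /\
  (forall x, mul x one = x) /\
  (forall x, sc 1 x = x) /\
  (forall a b x, sc a (sc b x) = sc (a * b) x) /\
  (forall a x y, sc a (mul x y) = mul (sc a x) y
                     /\ sc a (mul x y) = mul x (sc a y)).

Definition commutative_mul : Prop := forall x y, mul x y = mul y x.

Fixpoint mpow (x : X) (k : nat) : X :=
  if k is k'.+1 then mul x (mpow x k') else one.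

Definition zpow (x x' : X) (k : int) : X :=
  match k with Posz m => mpow x m | Negz m => mpow x' m.+1 end.

Definition expansion (n : nat) (e e' : 'I_n -> X) (mu : K) (k : 'I_n -> int) : X :=
  sc mu (foldr (fun i acc => mul (zpow (e i) (e' i) (k i)) acc) one (enum 'I_n)).

Definition is_basis (n : nat) (e e' : 'I_n -> X) : Prop :=
  (forall i, mul (e i) (e' i) = one /\ mul (e' i) (e i) = one) /\
  forall x, exists mu k, x = expansion e e' mu k /\
    forall mu' k', x = expansion e e' mu' k' -> mu' = mu /\ (forall i, k' i = k i).

Definition quantity_space : Prop :=
  [/\ scalable_monoid, commutative_mul &
      exists n (e e' : 'I_n -> X), is_basis e e'].

Definition qsim (x y : X) : Prop := exists a b, sc a x = sc b y.

Definition is_dimension (C : X -> Prop) : Prop :=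
  exists x0, forall x, C x <-> qsim x x0.

Definition nonzero (x : X) : Prop := x <> sc 0 x.

Definition unit_for (C : X -> Prop) (u : X) : Prop :=
  [/\ C u, (forall x, C x -> exists l, x = sc l u)
    & (forall l l', sc l u = sc l' u -> l = l')].

End QS.

From mathcomp Require Import all_boot all_order all_algebra.
Set Implicit Arguments. Unset Strict Implicit. Unset Printing Implicit Defensive.
Import GRing.Theory.
Local Open Scope ring_scope.

(* Expand a representative of the dimension as [x0 = mu . e^k].  By uniqueness
   of expansions (which holds for every coefficient, including 0), [x ~ x0]
   forces [x] to carry the same exponent vector [k], so every [x] in the class
   is [nu . e^k] with [nu] determined by [x]: the monomial [1 . e^k] is a unit,
   and it is non-zero because [1 != 0]. *)

Section Expansions.
Variables (K : fieldType) (Q : Type) (mul : Q -> Q -> Q) (one : Q) (sc : K -> Q -> Q).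
Variables (n : nat) (e e' : 'I_n -> Q).
Hypothesis sc1 : forall x, sc 1 x = x.
Hypothesis scM : forall a b x, sc a (sc b x) = sc (a * b) x.
Hypothesis basis : is_basis mul one sc e e'.

Local Notation expand := (expansion mul one sc e e').

Lemma scale_expansion a mu k : sc a (expand mu k) = expand (a * mu) k.
Proof. by rewrite /expansion scM. Qed.

Lemma expansion_inj mu mu' k k' :
  expand mu k = expand mu' k' -> mu = mu' /\ k =1 k'.
Proof.
move=> E; have [? [? [_ uniq_exp]]] := basis.2 (expand mu k).
have [-> eq_k] := uniq_exp mu k erefl; have [-> eq_k'] := uniq_exp mu' k' E.
by split=> // i; rewrite eq_k eq_k'.
Qed.

Lemma eq_expansion mu k k' : k =1 k' -> expand mu k = expand mu k'.
Proof.
by move=> eq_k; congr (sc mu _); elim: (enum 'I_n) => //= i s ->; rewrite eq_k.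
Qed.

Lemma expansion_nonzero mu k : mu != 0 -> nonzero sc (expand mu k).
Proof.
by move=> /negP mu_neq0; rewrite /nonzero scale_expansion mul0r => /expansion_inj[/eqP].
Qed.

Lemma qsim_expansion mu mu' k k' :
  qsim sc (expand mu k) (expand mu' k') -> k =1 k'.
Proof. by move=> [a [b]]; rewrite !scale_expansion => /expansion_inj[]. Qed.

Lemma unit_for_monomial (C : Q -> Prop) mu k :
  (forall x, C x <-> qsim sc x (expand mu k)) -> unit_for sc C (expand 1 k).
Proof.
move=> dimC; split.
- by apply/dimC; exists mu, 1; rewrite scale_expansion mulr1 sc1.
- move=> x /dimC; have [nu [kx [-> _]]] := basis.2 x => /qsim_expansion eq_k.
  by exists nu; rewrite scale_expansion mulr1; apply: eq_expansion.
- by move=> l l'; rewrite !scale_expansion !mulr1 => /expansion_inj[].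
Qed.

End Expansions.

Theorem proposition3p8 (K : fieldType) (Q : Type)
  (mul : Q -> Q -> Q) (one : Q) (sc : K -> Q -> Q) :
  quantity_space mul one sc ->
  forall C : Q -> Prop, is_dimension sc C ->
  exists u, nonzero sc u /\ unit_for sc C u.
Proof.
move=> [[_ [_ [_ [sc1 [scM _]]]]] _ [n [e [e' basis]]]] C [x0 dimC].
have [mu [k [x0E _]]] := basis.2 x0.
exists (expansion mul one sc e e' 1 k); split.
- by apply: (expansion_nonzero scM basis); rewrite oner_eq0.
- by apply: (unit_for_monomial sc1 scM basis (mu := mu)); rewrite -x0E.
Qed.
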